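(* Let $\varphi,\mu\in\mathcal{M}$. Then $\varphi\mu=\mu\varphi$ if and only if there exists $\nu\in G_M$ with $|\nu|\le 2$ such that $\mu=\nu\varphi\nu^{-1}$.
   Context: Fix $n\ge 2$, $W=\{1,\dots,n\}$, $M=\{n+1,\dots,2n\}$, $I=W\cup M$. Permutations compose right-to-left. A matching is a permutation $\mu$ of $I$ with $\mu(W)=M$, $\mu(M)=W$ and $\mu(\mu(z))=z$ for all $z\in I$; $\mathcal{M}$ is the set of matchings. $G_M=\{\nu\in\mathrm{Sym}(I):\nu(x)=x\text{ for all }x\in W\}$. $|\nu|$ denotes the order of the permutation $\nu$. *)

From mathcomp Require Import all_boot all_fingroup.
Set Implicit Arguments. Unset Strict Implicit. Unset Printing Implicit Defensive.

(* Index set I = {1,...,2n} is represented by 'I_(n + n) = {0,...,2n-1};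
   W = {1..n} becomes {0..n-1} and M = {n+1..2n} becomes {n..2n-1}. *)
Definition Wset (n : nat) : {set 'I_(n + n)} := [set i : 'I_(n + n) | i < n].
Definition Mset (n : nat) : {set 'I_(n + n)} := [set i : 'I_(n + n) | n <= i].

(* Composition right-to-left: (rcomp s t) x = s (t x).
   (mathcomp's group product on {perm _} composes left-to-right.) *)
Definition rcomp (T : finType) (s t : {perm T}) : {perm T} := (t * s)%g.

Lemma rcompE (T : finType) (s t : {perm T}) x : rcomp s t x = s (t x).
Proof. by rewrite /rcomp permM. Qed.

Definition is_matching (n : nat) (mu : {perm 'I_(n + n)}) : Prop :=
  [/\ mu @: Wset n = Mset n, mu @: Mset n = Wset n & forall z, mu (mu z) = z].

Definition in_GM (n : nat) (nu : {perm 'I_(n + n)}) : Prop :=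
  forall x, x \in Wset n -> nu x = x.

(* Let W be a set and phi, mu involutions exchanging W and its complement.
   If nu fixes W pointwise and is an involution, then nu also preserves the
   complement, and a case split on x \in W shows that phi commutes with
   phi ^ nu.  Conversely, if mu commutes with phi, the map equal to the
   identity on W and to mu \o phi off W is an involution fixing W, and it
   conjugates phi into mu. *)

From mathcomp Require Import all_boot all_fingroup.
From mathcomp Require Import cyclic.

Set Implicit Arguments.
Unset Strict Implicit.
Unset Printing Implicit Defensive.

Lemma order_le2 (gT : finGroupType) (x : gT) : (#[x]%g <= 2) = (x ^+ 2 == 1)%g.
Proof.
rewrite -order_dvdn; apply/idP/idP => [|/dvdn_leq]; last exact.
by have := order_gt0 x; case: #[x]%g => [|[|[|k]]].
Qed.

Section InvolutivePerm.

Variable T : finType.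

Lemma perm_expg2_eq1P (s : {perm T}) : reflect (involutive s) (s ^+ 2 == 1)%g.
Proof.
apply: (iffP eqP) => [s2 x | sK].
  by rewrite -permM -expg2 s2 perm1.
by apply/permP => x; rewrite expg2 permM sK perm1.
Qed.

Lemma perm_order_le2P (s : {perm T}) : reflect (involutive s) (#[s]%g <= 2).
Proof. by rewrite order_le2; apply: perm_expg2_eq1P. Qed.

Lemma involutive_permV (s : {perm T}) : involutive s -> (s^-1 = s)%g.
Proof. by move=> sK; apply/permP => x; rewrite -{2}(permKV s x) sK. Qed.

End InvolutivePerm.

Section SideExchange.

Variables (T : finType) (W : {set T}) (phi : {perm T}).
Hypotheses (phiK : involutive phi) (phiW : forall x, (phi x \in W) = (x \notin W)).

Lemma fixer_stable (nu : {perm T}) :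
  {in W, nu =1 id} -> forall x, (nu x \in W) = (x \in W).
Proof.
move=> nuW x; case: (boolP (x \in W)) => xW; first by rewrite nuW.
apply: contraNF xW => nuxW.
have nuxx : nu x = x by apply: (@perm_inj _ nu); rewrite nuW.
by rewrite -nuxx.
Qed.

Lemma conjg_fixer_commute (nu : {perm T}) :
  {in W, nu =1 id} -> involutive nu -> commute (phi ^ nu)%g phi.
Proof.
move=> nuW nuK; have nuWW := fixer_stable nuW.
apply/permP => x; rewrite !permM involutive_permV //.
case: (boolP (x \in W)) => xW.
- rewrite [nu x]nuW // [nu (phi (nu _))]nuW //.
  by rewrite phiW nuWW phiW xW.
- rewrite [nu (phi x)]nuW ?phiW // phiK [nu (phi (nu x))]nuW ?phiK //.
  by rewrite phiW nuWW.
Qed.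

Variable mu : {perm T}.
Hypotheses (muK : involutive mu) (muW : forall x, (mu x \in W) = (x \notin W)).
Hypothesis mu_phi : commute mu phi.

Let phi_mu x : phi (mu x) = mu (phi x).
Proof. by rewrite -permM mu_phi permM. Qed.

Definition conjugator_fun x := if x \in W then x else mu (phi x).

Lemma conjugator_funK : involutive conjugator_fun.
Proof.
move=> x; rewrite /conjugator_fun.
case: (boolP (x \in W)) => xW; first by rewrite xW.
by rewrite muW phiW xW /= phi_mu muK phiK.
Qed.

Definition conjugator : {perm T} := perm (inv_inj conjugator_funK).

Lemma conjugator_fixW : {in W, conjugator =1 id}.
Proof. by move=> x xW; rewrite permE /conjugator_fun xW. Qed.

Lemma conjugatorK : involutive conjugator.
Proof. by move=> x; rewrite !permE conjugator_funK. Qed.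

Lemma conjg_conjugator : (phi ^ conjugator)%g = mu.
Proof.
apply/permP => x; rewrite !permM involutive_permV; last exact: conjugatorK.
rewrite !permE /conjugator_fun; case: (boolP (x \in W)) => xW.
- by rewrite phiW xW /= phiK.
- by rewrite phi_mu phiK muW xW.
Qed.

End SideExchange.

Lemma Mset_compl n : Mset n = ~: Wset n.
Proof. by apply/setP => i; rewrite !inE -leqNgt. Qed.

Lemma matching_exchange n (p : {perm 'I_(n + n)}) :
  is_matching p -> forall x, (p x \in Wset n) = (x \notin Wset n).
Proof.
case=> pW pM _ x; case: (boolP (x \in Wset n)) => xW.
  have : p x \in Mset n by rewrite -pW imset_f.
  by rewrite Mset_compl inE => /negbTE.
by rewrite -pM imset_f // Mset_compl inE.
Qed.

Theorem proposition19 (n : nat) (hn : 2 <= n) (phi mu : {perm 'I_(n + n)}) :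
  is_matching phi -> is_matching mu ->
  (rcomp phi mu = rcomp mu phi <->
   exists nu : {perm 'I_(n + n)},
     [/\ in_GM nu, (#[nu]%g <= 2)%N & mu = rcomp (rcomp nu phi) (nu^-1)%g]).
Proof.
move=> Hphi Hmu.
have phiK : involutive phi by case: Hphi.
have muK : involutive mu by case: Hmu.
have phiW := matching_exchange Hphi; have muW := matching_exchange Hmu.
(* [rcomp s t] is [t * s], so both sides are definitionally group-theoretic. *)
change (commute mu phi <-> exists nu : {perm 'I_(n + n)},
  [/\ {in Wset n, nu =1 id}, #[nu]%g <= 2 & mu = (phi ^ nu)%g]).
split=> [mu_phi | [nu [nuW /perm_order_le2P nuK ->]]].
- exists (conjugator phiK phiW muK muW mu_phi); split.
  + exact: conjugator_fixW.
  + exact/perm_order_le2P/conjugatorK.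
  + by rewrite conjg_conjugator.
- exact: conjg_fixer_commute.
Qed.
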